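(* Let $R\subseteq S_n$ be a top-$k$ partial ranking, $\sigma\in R$ and $\tau\in S_n$. Then $$d(A_R(\sigma),\tau)=d(\sigma,\tau)+\binom{n-k}2-2\,d(\sigma,\Pi_R(\tau)).$$
   Context: $S_n$ is the symmetric group on $[n]$; $\sigma\in S_n$ is identified with the full ranking $\sigma(1)\succ\cdots\succ\sigma(n)$. For distinct items $x,y$, $\{x,y\}$ is discordant for $\sigma,\tau$ if $(\sigma^{-1}(x)-\sigma^{-1}(y))(\tau^{-1}(x)-\tau^{-1}(y))<0$. The Kendall distance $d(\sigma,\tau)$ is the number of unordered discordant pairs. For $0\le k\le n$ and distinct $a_1,\dots,a_k\in[n]$, the top-$k$ partial ranking is the set $R=\{\sigma\in S_n:\sigma(i)=a_i,\ i\le k\}$. The antithetic operator $A_R:R\to R$ is $A_R(\sigma)(i)=a_i$ for $i\le k$ and $A_R(\sigma)(k+j)=\sigma(n+1-j)$ for $j=1,\dots,n-k$. For $\tau\in S_n$, $\Pi_R(\tau)$ denotes the unique element of $R$ minimising $\rho\mapsto d(\rho,\tau)$ over $\rho\in R$. *)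

(* Items [n] and positions 1..n are 0-indexed: 'I_n. *)
From HB Require Import structures.
From mathcomp Require Import all_boot all_order all_algebra all_fingroup.
Set Implicit Arguments. Unset Strict Implicit. Unset Printing Implicit Defensive.
Import Order.TTheory GRing.Theory Num.Theory.

Definition pos n (s : {perm 'I_n}) (x : 'I_n) : int := (nat_of_ord ((s^-1)%g x))%:Z.

Definition discordant n (s t : {perm 'I_n}) (x y : 'I_n) : bool :=
  ((pos s x - pos s y) * (pos t x - pos t y) < 0)%R.

Definition kendall n (s t : {perm 'I_n}) : nat :=
  #|[set p : 'I_n * 'I_n | (p.1 < p.2)%N && discordant s t p.1 p.2]|.

(* Top-k partial ranking given by distinct a_0..a_{k-1} (a : 'I_k -> 'I_n injective):
   s(i) = a_i for every position i < k. *)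
Definition in_topk n k (a : 'I_k -> 'I_n) (s : {perm 'I_n}) : Prop :=
  forall (i : 'I_n) (j : 'I_k), nat_of_ord i = nat_of_ord j -> s i = a j.

(* The antithetic operator, 0-indexed: A(s)(i) = a_i for i < k, and
   A(s)(i) = s(n-1+k-i) for k <= i < n. *)
Definition anti_fun n k (a : 'I_k -> 'I_n) (s : {perm 'I_n}) (i : 'I_n) : 'I_n :=
  if insub (nat_of_ord i) : option 'I_k is Some j then a j
  else s (insubd i (n.-1 + k - i)%N).

(* as a permutation; the formula is injective whenever s lies in R,
   which is the only case used (A_R : R -> R). *)
Definition anti n k (a : 'I_k -> 'I_n) (s : {perm 'I_n}) : {perm 'I_n} :=
  match boolP (injectiveb (anti_fun a s)) with
  | AltTrue h => perm (injectiveP _ h)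
  | AltFalse _ => s
  end.

(* rho is the (unique) minimiser of rho |-> d(rho,t) over R, i.e. rho = Pi_R(t) *)
Definition is_proj n k (a : 'I_k -> 'I_n) (t rho : {perm 'I_n}) : Prop :=
  in_topk a rho /\ forall r : {perm 'I_n}, in_topk a r -> (kendall rho t <= kendall r t)%N.

(* Call a pair of items a tail pair when neither item is among a_1..a_k.
   Two rankings of R order every other pair the same way, so on non-tail pairs
   their discordances with any tau coincide.  A_R(sigma) reverses sigma on the
   tail, so it is discordant with tau on exactly the tail pairs where sigma is
   concordant with tau.  Since R contains a ranking that orders the tail like
   tau, the projection Pi_R(tau) must order the tail like tau; hence
   d(sigma, Pi_R(tau)) counts the tail pairs discordant for sigma and tau, and
   the identity follows by counting tail pairs, of which there are C(n-k,2). *)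

From mathcomp Require Import all_boot all_order all_algebra all_fingroup.
From mathcomp Require Import zify.
Import Order.TTheory GRing.Theory Num.Theory.
Set Implicit Arguments. Unset Strict Implicit. Unset Printing Implicit Defensive.

Lemma index_filter_lt (T : eqType) (P : pred T) (s : seq T) (x y : T) :
  x \in filter P s -> y \in filter P s ->
  (index x (filter P s) < index y (filter P s))%N = (index x s < index y s)%N.
Proof.
elim: s => //= z s IHs; case Pz: (P z) => /=.
- rewrite !inE; have [<- _|zx /= xs] := eqVneq z x.
    by case: (z == y).
  have [<- //|zy /= ys] := eqVneq z y.
  by rewrite ltnS IHs.
- move=> xs ys; have zx : z != x by apply: contraTneq xs => <-; rewrite mem_filter Pz.
  have zy : z != y by apply: contraTneq ys => <-; rewrite mem_filter Pz.
  by rewrite /= (negPf zx) (negPf zy) ltnS IHs.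
Qed.

Lemma ord_ltn_neq m (x y : 'I_m) : (x < y)%N -> x != y.
Proof. by apply: contraTneq => ->; rewrite ltnn. Qed.

Section Kendall.
Variable n : nat.
Implicit Types (u v w : {perm 'I_n}) (x y : 'I_n).

Definition prec u x y := ((u^-1)%g x < (u^-1)%g y)%N.

Lemma precN u x y : x != y -> prec u y x = ~~ prec u x y.
Proof.
by move=> xy; rewrite /prec ltnNge leq_eqVlt val_eqE (inj_eq perm_inj) (negPf xy).
Qed.

Lemma discordant_prec u v x y : x != y -> discordant u v x y = (prec u x y != prec v x y).
Proof.
move=> xy; rewrite /discordant /pos mulr_lt0 !subr_lt0 !subr_eq0 !ltz_nat !eqz_nat.
rewrite !val_eqE !(inj_eq perm_inj) (negPf xy) /prec.
by case: (_ < _)%N; case: (_ < _)%N.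
Qed.

Definition discord_set u v :=
  [set p : 'I_n * 'I_n | (p.1 < p.2)%N && discordant u v p.1 p.2].

Lemma card_discord_set u v : #|discord_set u v| = kendall u v.
Proof. by []. Qed.

Lemma discord_setC u v : discord_set u v = discord_set v u.
Proof. by apply/setP => p; rewrite !inE /discordant mulrC. Qed.

Lemma discord_set_id u : discord_set u u = set0.
Proof.
apply/setP => -[x y]; rewrite !inE /=; case: ltnP => //= xy.
by rewrite discordant_prec ?ord_ltn_neq // eqxx.
Qed.

Lemma discord_setI_agree (P : {set 'I_n * 'I_n}) u v w :
  (forall p, p \in P -> (p.1 < p.2)%N -> prec v p.1 p.2 = prec w p.1 p.2) ->
  discord_set u v :&: P = discord_set u w :&: P.
Proof.
move=> vw; apply/setP => -[x y]; rewrite !inE /=.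
case Pxy: ((x, y) \in P); rewrite ?andbF //.
case: ltnP => //= xy.
by rewrite !discordant_prec ?ord_ltn_neq // (vw _ Pxy).
Qed.

Lemma card_ltn_pairs (A : {set 'I_n}) :
  #|[set p : 'I_n * 'I_n | [&& (p.1 < p.2)%N, p.1 \in A & p.2 \in A]]| = 'C(#|A|, 2).
Proof.
rewrite -cards_draws; set T := [set p | _].
pose pair_set (p : 'I_n * 'I_n) := [set p.1; p.2].
have inj_pair_set : {in T &, injective pair_set}.
  move=> [x1 y1] [x2 y2]; rewrite !inE /pair_set /= => /andP[lt1 _] /andP[lt2 _] E.
  have : x1 \in [set x2; y2] by rewrite -E set21.
  have : y1 \in [set x2; y2] by rewrite -E set22.
  rewrite !in_set2 => /orP[]/eqP y1E /orP[]/eqP x1E; subst; rewrite ?ltnn // in lt1.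
  by have := ltn_trans lt1 lt2; rewrite ltnn.
rewrite -(card_in_imset inj_pair_set); apply: eq_card => B; apply/imsetP/idP.
  case=> -[x y]; rewrite !inE /= => /and3P[xy xA yA] ->.
  rewrite /pair_set /= cards2 ord_ltn_neq // andbT.
  by apply/subsetP => z; rewrite !inE => /orP[]/eqP->.
rewrite inE => /andP[BA /cards2P[x [y [xy EB]]]].
have xA : x \in A by apply: (subsetP BA); rewrite EB set21.
have yA : y \in A by apply: (subsetP BA); rewrite EB set22.
move: xy; rewrite -val_eqE neq_ltn => /orP[lt|lt].
  by exists (x, y); rewrite ?inE /= ?lt ?xA ?yA.
by exists (y, x); rewrite ?inE /= ?lt ?xA ?yA // EB /pair_set setUC.
Qed.

Lemma index_map_perm u x : index x (map u (enum 'I_n)) = (u^-1)%g x.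
Proof. by rewrite -{1}(permKV u x) index_map ?index_enum_ord //; apply: perm_inj. Qed.

Lemma perm_of_seq (L : seq 'I_n) : perm_eq L (enum 'I_n) ->
  exists u : {perm 'I_n}, map u (enum 'I_n) = L.
Proof.
rewrite -val_ord_tuple => /tuple_permP[u ->]; exists u.
by apply: eq_map => i; rewrite tnth_ord_tuple.
Qed.

End Kendall.

Section TopK.
Variables (n k : nat) (a : 'I_k -> 'I_n).
Hypotheses (le_kn : (k <= n)%N) (a_inj : injective a).
Implicit Types (s t u v w : {perm 'I_n}) (x y : 'I_n).

Definition tail := [set x | x \notin codom a].

Definition tail_pairs :=
  [set p : 'I_n * 'I_n | [&& (p.1 < p.2)%N, p.1 \in tail & p.2 \in tail]].

Lemma card_tail : #|tail| = (n - k)%N.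
Proof.
have E : (#|codom a| + #|[predC codom a]| = n)%N by rewrite cardC card_ord.
rewrite card_codom // card_ord in E.
by rewrite -{}[in RHS]E addKn; apply: eq_card => x; rewrite !inE.
Qed.

Lemma card_tail_pairs : #|tail_pairs| = 'C(n - k, 2).
Proof. by rewrite -card_tail -card_ltn_pairs. Qed.

Lemma topk_pos u (i : 'I_k) : in_topk a u -> val ((u^-1)%g (a i)) = i.
Proof.
move=> uR; have lt_in : (i < n)%N := leq_trans (ltn_ord i) le_kn.
by rewrite -(uR (Ordinal lt_in) i erefl) permK.
Qed.

Lemma topk_tail_pos u x : in_topk a u -> (k <= (u^-1)%g x)%N = (x \in tail).
Proof.
move=> uR; rewrite inE; apply/idP/idP => [le_kx|].
  by apply/codomP => -[i xE]; move: le_kx; rewrite xE topk_pos // leqNgt ltn_ord.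
apply: contraNT; rewrite -ltnNge => lt_xk; apply/codomP; exists (Ordinal lt_xk).
by rewrite -(uR _ (Ordinal lt_xk) erefl) permKV.
Qed.

Lemma topk_before u (i : 'I_k) y : in_topk a u -> y \in tail ->
  ((u^-1)%g (a i) < (u^-1)%g y)%N.
Proof. by move=> uR yT; rewrite topk_pos // (leq_trans (ltn_ord i)) ?topk_tail_pos. Qed.

Lemma prec_topk u w x y : in_topk a u -> in_topk a w ->
  ~~ ((x \in tail) && (y \in tail)) -> prec u x y = prec w x y.
Proof.
move=> uR wR; rewrite /prec.
have top z : z \notin tail -> exists i, z = a i by rewrite inE negbK => /codomP.
have [xT|/top[i ->]] := boolP (x \in tail);
  have [yT|/top[j ->]] := boolP (y \in tail) => //.
- by rewrite !leq_gtF ?(ltnW (topk_before _ _ xT)).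
- by rewrite !topk_before.
- by rewrite !topk_pos.
Qed.

Lemma discord_setD_topk v u w : in_topk a u -> in_topk a w ->
  discord_set u v :\: tail_pairs = discord_set w v :\: tail_pairs.
Proof.
move=> uR wR; rewrite !setDE discord_setC [discord_set w v]discord_setC.
apply: discord_setI_agree => -[x y]; rewrite in_setC inE /= => not_tail lt_xy.
by apply: prec_topk; rewrite lt_xy in not_tail.
Qed.

Definition mirror (i : 'I_n) : 'I_n :=
  if (i < k)%N then i else insubd i (n.-1 + k - i).

Lemma val_mirror_tail (i : 'I_n) : (k <= i)%N -> val (mirror i) = (n.-1 + k - i)%N.
Proof.
move=> le_ki; rewrite /mirror ltnNge le_ki /= val_insubd ifT //.
by have := ltn_ord i; lia.
Qed.

Lemma mirrorK : involutive mirror.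
Proof.
move=> i; case: (ltnP i k) => [lt_ik|le_ki]; first by rewrite /mirror !lt_ik.
have lt_in := ltn_ord i.
have le_km : (k <= mirror i)%N by rewrite val_mirror_tail //; lia.
by apply: val_inj => /=; rewrite !val_mirror_tail //; lia.
Qed.

Lemma anti_funE s : in_topk a s -> anti_fun a s =1 s \o mirror.
Proof.
move=> sR i; rewrite /anti_fun /mirror /=; case: ltnP => [lt_ik|le_ki].
  by rewrite insubT /= (sR i (Ordinal lt_ik)).
by rewrite insubF // ltnNge le_ki.
Qed.

Lemma anti_fun_inj s : in_topk a s -> injective (anti_fun a s).
Proof.
move=> sR; apply: eq_inj (inj_comp (@perm_inj _ s) (can_inj mirrorK)) _.
by move=> i; rewrite anti_funE.
Qed.

Lemma antiE s : in_topk a s -> anti a s =1 s \o mirror.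
Proof.
move=> sR i; rewrite /anti; destruct boolP as [inj_anti|not_inj].
  by rewrite permE anti_funE.
by case/negP: not_inj; apply/injectiveP; apply: anti_fun_inj.
Qed.

Lemma anti_topk s : in_topk a s -> in_topk a (anti a s).
Proof. by move=> sR i j ij; rewrite antiE //= /mirror ij ltn_ord; apply: sR. Qed.

Lemma anti_inv s x : in_topk a s -> ((anti a s)^-1)%g x = mirror ((s^-1)%g x).
Proof.
by move=> sR; apply: (@perm_inj _ (anti a s)); rewrite permKV antiE //= mirrorK permKV.
Qed.

Lemma prec_anti s x y : in_topk a s -> x \in tail -> y \in tail ->
  prec (anti a s) x y = prec s y x.
Proof.
move=> sR; rewrite -!(topk_tail_pos _ sR) /prec !anti_inv // => le_kx le_ky.
rewrite !val_mirror_tail //; have := ltn_ord ((s^-1)%g x); have := ltn_ord ((s^-1)%g y).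
by move=> *; apply/idP/idP; lia.
Qed.

Lemma discord_set_anti s v : in_topk a s ->
  discord_set (anti a s) v :&: tail_pairs = tail_pairs :\: discord_set s v.
Proof.
move=> sR; apply/setP => -[x y]; rewrite in_setI in_setD.
case tp: ((x, y) \in tail_pairs); rewrite ?andbF ?andbT //.
move: tp; rewrite inE /= => /and3P[lt_xy xT yT]; rewrite !inE /= lt_xy /=.
rewrite !discordant_prec ?ord_ltn_neq // prec_anti // precN ?ord_ltn_neq //.
by case: (prec s x y); case: (prec v x y).
Qed.

Lemma exists_topk_agree t : exists2 r, in_topk a r &
  forall x y, x \in tail -> y \in tail -> prec r x y = prec t x y.
Proof.
pose top := map a (enum 'I_k).
pose bottom := [seq x <- map t (enum 'I_n) | x \in tail].
have in_image x : x \in map t (enum 'I_n) by rewrite -[x](permKV t) map_f ?mem_enum.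
have notin_top x : x \in tail -> x \notin top.
  by rewrite inE; apply: contra => /mapP[i _ ->]; apply: codom_f.
have perm_L : perm_eq (top ++ bottom) (enum 'I_n).
  apply: uniq_perm => [||x]; rewrite ?enum_uniq //.
    rewrite cat_uniq map_inj_uniq ?enum_uniq //=; apply/andP; split.
      by apply/hasPn => x; rewrite mem_filter => /andP[xT _]; apply: notin_top.
    by rewrite filter_uniq // map_inj_uniq ?enum_uniq //; apply: perm_inj.
  rewrite mem_enum mem_cat mem_filter in_image andbT.
  have [//|] := boolP (x \in tail); rewrite ?orbT // inE negbK => /codomP[i ->].
  by rewrite map_f ?mem_enum.
have [r rE] := perm_of_seq perm_L.
have indexE x : index x (top ++ bottom) = (r^-1)%g x by rewrite -rE index_map_perm.
exists r.
  move=> i j ij; rewrite -[a j](permKV r); congr (r _); apply: val_inj.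
  by rewrite /= -indexE index_cat map_f ?mem_enum // index_map // index_enum_ord.
move=> x y xT yT; rewrite /prec -!indexE !index_cat (negPf (notin_top _ xT)).
rewrite (negPf (notin_top _ yT)) ltn_add2l index_filter_lt ?mem_filter ?xT ?yT ?in_image //.
by rewrite !index_map_perm.
Qed.

Lemma proj_agree t rho : is_proj a t rho ->
  forall p, p \in tail_pairs -> prec rho p.1 p.2 = prec t p.1 p.2.
Proof.
move=> [rhoR rho_min]; have [r rR r_t] := exists_topk_agree t.
have kendallE u : in_topk a u ->
    kendall u t = (#|discord_set u t :&: tail_pairs| + #|discord_set r t :\: tail_pairs|)%N.
  by move=> uR; rewrite -(discord_setD_topk t uR rR) -card_discord_set cardsID.
have r_t0 : discord_set r t :&: tail_pairs = set0.
  rewrite (@discord_setI_agree _ _ _ _ r) ?discord_set_id ?set0I // => -[x y].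
  by rewrite inE /= => /and3P[_ xT yT] _; rewrite r_t.
have rho_t0 : discord_set rho t :&: tail_pairs = set0.
  apply/eqP; rewrite -cards_eq0 -leqn0.
  by have := rho_min r rR; rewrite !kendallE // r_t0 cards0 leq_add2r.
move=> [x y] tp; have := tp; rewrite inE /= => /and3P[lt_xy _ _].
have : (x, y) \notin discord_set rho t :&: tail_pairs by rewrite rho_t0 inE.
rewrite in_setI tp andbT inE /= lt_xy discordant_prec ?ord_ltn_neq //.
by rewrite negbK => /eqP.
Qed.

End TopK.

Theorem lemma6 (n k : nat) (a : 'I_k -> 'I_n) (s t rho : {perm 'I_n}) :
  (k <= n)%N -> injective a ->
  in_topk a s -> is_proj a t rho ->
  ((kendall (anti a s) t)%:Z =
     (kendall s t)%:Z + ('C(n - k, 2))%:Z - 2 * (kendall s rho)%:Z)%R.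
Proof.
move=> le_kn a_inj sR rho_proj; have rhoR := rho_proj.1.
set TT := tail_pairs a.
have kendall_split u v : kendall u v = (#|discord_set u v :&: TT| + #|discord_set u v :\: TT|)%N.
  by rewrite -card_discord_set cardsID.
have anti_tail : #|discord_set (anti a s) t :&: TT| = (#|TT| - #|discord_set s t :&: TT|)%N.
  by rewrite discord_set_anti // cardsD setIC.
have anti_off : discord_set (anti a s) t :\: TT = discord_set s t :\: TT.
  by apply: discord_setD_topk => //; apply: anti_topk.
have rho_tail : discord_set s rho :&: TT = discord_set s t :&: TT.
  by apply: discord_setI_agree => p /(proj_agree le_kn a_inj rho_proj).
have rho_off : discord_set s rho :\: TT = set0.
  by rewrite (discord_setD_topk le_kn rho sR rhoR) discord_set_id set0D.
have le_TT : (#|discord_set s t :&: TT| <= #|TT|)%N by rewrite subset_leq_card ?subsetIr.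
rewrite !kendall_split anti_tail anti_off rho_tail rho_off cards0 card_tail_pairs // in le_TT *.
lia.
Qed.
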